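(* Let $p$ be a positive integer, let $\lambda$ be a partition all of whose parts are multiples of $p$, and let $\lambda^c$ be the conjugate partition of $\lambda$. Then every maximal run of consecutive integers contained in the set $\beta(\lambda^c)$ has length divisible by $p$.
   Context: For a partition $\mu$, its $\beta$-set $\beta(\mu)$ is the set of hook lengths of the boxes in the first column of the Young diagram of $\mu$, where the hook length of a box is the number of boxes consisting of the box itself, the boxes directly to its right, and the boxes directly below it. Equivalently, if $\mu=(\mu_1,\dots,\mu_m)$ with $\mu_m>0$, then $\beta(\mu)=\{\mu_i+m-i : 1\le i\le m\}$. A maximal run of consecutive integers in a set $S\subseteq\mathbb{Z}$ is a set $\{a,a+1,\dots,b\}\subseteq S$ with $a-1\notin S$ and $b+1\notin S$; its length is $b-a+1$. *)

From mathcomp Require Import all_boot.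
Set Implicit Arguments. Unset Strict Implicit. Unset Printing Implicit Defensive.

Definition is_partition (mu : seq nat) : bool :=
  sorted geq mu && all (fun x => 0 < x) mu.

Definition conj_part (mu : seq nat) : seq nat :=
  [seq count (fun x => j < x) mu | j <- iota 0 (head 0 mu)].

(* beta-set: with mu = (mu_1,...,mu_m), mu_m > 0, the set
   { mu_i + m - i : 1 <= i <= m }; with 0-indexed i this is mu`_i + (m-1-i). *)
Definition beta_set (mu : seq nat) : seq nat :=
  [seq nth 0 mu i + (size mu - i.+1) | i <- iota 0 (size mu)].

(* {a,...,b} is a maximal run of consecutive integers in S (S a set of
   naturals, so a-1 \notin S is automatic when a = 0). *)
Definition maximal_run (S : pred nat) (a b : nat) : Prop :=
  a <= b /\ (forall k, a <= k <= b -> S k) /\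
  (0 < a -> ~~ S a.-1) /\ ~~ S b.+1.

From mathcomp Require Import all_boot.
From mathcomp Require Import zify.

(* Cutting the columns of lambda^c into blocks of p consecutive indices, the
   parts of lambda^c are constant on each block, because every part of lambda
   is a multiple of p.  A block therefore contributes p consecutive integers to
   beta(lambda^c), and since lambda^c is weakly decreasing, the contributions of
   different blocks are disjoint intervals of length p.  A maximal run of a
   disjoint union of such intervals starts at an interval and is a union of
   whole intervals, so its length is a multiple of p. *)

Section RunsOfBlockUnions.

Variables (p : nat) (Y : nat -> Prop) (S : pred nat).
Hypotheses (p_gt0 : 0 < p)
  (Y_sep : forall {y y'}, Y y -> Y y' -> y < y' -> y + p <= y')
  (S_blocks : forall x, S x <-> exists2 y, Y y & y <= x < y + p).

Lemma block_sub y t : Y y -> t < p -> S (y + t).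
Proof. by move=> Yy lt_tp; apply/S_blocks; exists y => //; lia. Qed.

Lemma run_from_block_dvd n a :
  Y a -> (forall k, a <= k < a + n -> S k) -> ~~ S (a + n) -> p %| n.
Proof.
elim/ltn_ind: n a => n IHn a Ya run_an notS_end.
have p_le_n : p <= n.
  by rewrite leqNgt; apply: contra notS_end => lt_np; apply: block_sub.
have [-> | lt_pn] := eqVneq n p; first exact: dvdnn.
have Y_ap : Y (a + p).
  have [y Yy y_ap] := (S_blocks (a + p)).1 (run_an (a + p) ltac:(lia)).
  case: (ltngtP y (a + p)) => [lt_y | gt_y | <- //]; last lia.
  by have := Y_sep Ya Yy ltac:(lia); lia.
have -> : n = (n - p) + p by lia.
rewrite dvdn_addl ?dvdnn //; apply: (IHn _ _ (a + p)) => //; first lia.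
- by move=> k k_run; apply: run_an; lia.
- by rewrite (_ : a + p + (n - p) = a + n) //; lia.
Qed.

Lemma maximal_run_start a b : maximal_run S a b -> Y a.
Proof.
case=> le_ab [run_ab [notS_pred _]].
have [y Yy /andP[le_ya lt_a]] := (S_blocks a).1 (run_ab a ltac:(lia)).
have [lt_ya | le_ay] := ltnP y a; last by rewrite (_ : a = y) //; lia.
have := block_sub y (a.-1 - y) Yy ltac:(lia).
by rewrite (_ : y + _ = a.-1) ?(negbTE (notS_pred _)) //; lia.
Qed.

Lemma maximal_run_dvd a b : maximal_run S a b -> p %| b - a + 1.
Proof.
move=> run; have Ya := maximal_run_start a b run.
case: run => le_ab [run_ab [_ notS_end]].
apply: (run_from_block_dvd _ a Ya) => [k k_run | ]; first by apply: run_ab; lia.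
by rewrite (_ : a + (b - a + 1) = b.+1) //; lia.
Qed.

End RunsOfBlockUnions.

Lemma mem_beta_set (mu : seq nat) x :
  reflect (exists2 i, i < size mu & x = nth 0 mu i + (size mu - i.+1))
          (x \in beta_set mu).
Proof.
apply: (iffP mapP) => [[i] | [i lt_i ->]].
  by rewrite mem_iota => /andP[_ lt_i] ->; exists i.
by exists i; rewrite // mem_iota.
Qed.

Section BetaSetBlocks.

Variables (p : nat) (mu : seq nat).
Hypotheses (p_dvd_size : p %| size mu)
  (mu_noninc : forall {i j}, i <= j -> nth 0 mu j <= nth 0 mu i)
  (mu_blocks : forall k r, r < p -> nth 0 mu (k * p + r) = nth 0 mu (k * p)).

Definition beta_block_start k := nth 0 mu (k * p) + (size mu - k.+1 * p).

Definition is_beta_block_start y :=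
  exists2 k, k * p < size mu & y = beta_block_start k.

Lemma block_le_size k : k * p < size mu -> k.+1 * p <= size mu.
Proof.
case/dvdnP: p_dvd_size => q ->; rewrite ltn_mul2r => /andP[_ lt_kq].
by rewrite leq_mul2r lt_kq orbT.
Qed.

Lemma beta_block_start_decr k k' :
  k < k' -> k' * p < size mu -> beta_block_start k' + p <= beta_block_start k.
Proof.
move=> lt_kk' lt_k'; have := block_le_size k' lt_k'.
have := leq_mul lt_kk' (leqnn p); have := mu_noninc (leq_mul (ltnW lt_kk') (leqnn p)).
by rewrite /beta_block_start !mulSn; lia.
Qed.

Lemma beta_block_start_sep y y' :
  is_beta_block_start y -> is_beta_block_start y' -> y < y' -> y + p <= y'.
Proof.
move=> [k lt_k ->] [k' lt_k' ->].
case: (ltngtP k k') => [lt_kk' | lt_k'k | ->]; last by rewrite ltnn.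
- by have := beta_block_start_decr k k' lt_kk' lt_k'; lia.
- by have := beta_block_start_decr k' k lt_k'k lt_k; lia.
Qed.

Lemma mem_beta_set_blocks x :
  x \in beta_set mu <-> exists2 y, is_beta_block_start y & y <= x < y + p.
Proof.
split=> [/mem_beta_set[i lt_i ->] | [y [k lt_k def_y] /andP[le_yx lt_xy]]].
  have p_gt0 : 0 < p.
    by rewrite lt0n; apply: contraTneq p_dvd_size => ->; rewrite dvd0n; lia.
  move: (divn_eq i p) (ltn_mod i p) lt_i; rewrite p_gt0.
  move: (i %/ p) (i %% p) => k r -> lt_r lt_i.
  have lt_k : k * p < size mu by lia.
  exists (beta_block_start k); first by exists k.
  have := block_le_size _ lt_k.
  by rewrite /beta_block_start mu_blocks // mulSn; lia.
have := block_le_size _ lt_k; move: def_y; rewrite /beta_block_start mulSn => def_y le_k.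
apply/mem_beta_set; exists (k * p + (y + p.-1 - x)); first lia.
by rewrite mu_blocks; lia.
Qed.

Lemma beta_set_run_dvd a b :
  0 < p -> maximal_run (fun x => x \in beta_set mu) a b -> p %| b - a + 1.
Proof.
move=> p_gt0; apply: (@maximal_run_dvd p is_beta_block_start _ p_gt0).
  exact: beta_block_start_sep.
exact: mem_beta_set_blocks.
Qed.

End BetaSetBlocks.

Lemma nth_conj_part lambda j :
  is_partition lambda -> nth 0 (conj_part lambda) j = count (fun x => j < x) lambda.
Proof.
case/andP=> sorted_lambda _.
have [lt_j | le_j] := ltnP j (head 0 lambda).
  by rewrite (nth_map 0) ?size_iota // nth_iota.
rewrite nth_default ?size_map ?size_iota //.
case: lambda sorted_lambda le_j => [|x s] //= path_s le_xj.
have le_sx : all (geq x) s.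
  by apply: order_path_min path_s => y z t le_yz le_ty; apply: leq_trans le_ty le_yz.
rewrite ltnNge le_xj add0n (eq_in_count (a2 := pred0)) ?count_pred0 // => y /(allP le_sx).
by rewrite /= ltnNge => /leq_trans ->.
Qed.

Lemma ltn_mul_addr_dvd p k r x : r < p -> p %| x -> (k * p + r < x) = (k * p < x).
Proof.
move=> lt_rp /dvdnP[t ->]; apply/idP/idP => [|]; first lia.
rewrite ltn_mul2r => /andP[_ lt_kt]; have := leq_mul lt_kt (leqnn p).
by rewrite mulSn; lia.
Qed.

Theorem lemma3p3 (p : nat) (lambda : seq nat) :
  0 < p -> is_partition lambda -> all (fun x => p %| x) lambda ->
  forall a b : nat,
    maximal_run (fun k => k \in beta_set (conj_part lambda)) a b ->
    p %| (b - a + 1).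
Proof.
move=> p_gt0 lambda_part lambda_dvd a b; apply: beta_set_run_dvd => //.
- rewrite size_map size_iota.
  by case: lambda lambda_dvd {lambda_part} => //= x s /andP[].
- move=> i j le_ij; rewrite !nth_conj_part //.
  by apply: sub_count => x; apply: leq_ltn_trans.
- move=> k r lt_rp; rewrite !nth_conj_part //.
  by apply: eq_in_count => x /(allP lambda_dvd); apply: ltn_mul_addr_dvd.
Qed.
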